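(* Let $Q$ be an $s\times t$ real matrix with $s\le t$, let $T$ be a maximal transversal of $Q$ (i.e. $|T|={\rm tdet}(Q)$), and let $a$ be an entry of $T$. Let $R$ be the sum of the entries in the row of $Q$ containing $a$ and $C$ the sum of the entries in the column of $Q$ containing $a$. Then $$R+C\le {\rm tdet}(Q)+t\,a.$$
   Context: For an $s\times t$ matrix $Q=(a_{ij})$ with $s\le t$, a transversal of $Q$ is a set of entries $T=\{a_{1i_1},\dots,a_{si_s}\}$ with $i_1,\dots,i_s\in\{1,\dots,t\}$ pairwise distinct, and $|T|=a_{1i_1}+\cdots+a_{si_s}$. The tropical determinant is ${\rm tdet}(Q)=\max_T|T|$ over all transversals $T$ of $Q$. *)

From HB Require Import structures.
From mathcomp Require Import all_boot all_order all_algebra.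
Set Implicit Arguments. Unset Strict Implicit. Unset Printing Implicit Defensive.
Import Order.TTheory GRing.Theory Num.Theory.
Local Open Scope ring_scope.

(* A transversal of an s x t matrix (s <= t) is given by an injective choice
   of column f i for each row i; its value |T| is the sum of the chosen entries. *)
Definition is_tdet_transversal (s t : nat) (f : {ffun 'I_s -> 'I_t}) : bool :=
  injectiveb f.

Definition tvalue (R : realFieldType) (s t : nat) (Q : 'M[R]_(s, t))
  (f : {ffun 'I_s -> 'I_t}) : R := \sum_(i < s) Q i (f i).

Definition transversals (s t : nat) : seq {ffun 'I_s -> 'I_t} :=
  [seq f <- enum {ffun 'I_s -> 'I_t} | is_tdet_transversal f].

(* Tropical determinant: maximum of |T| over all transversals T
   (the fold starts from the first value, so it is the genuine maximum
   whenever a transversal exists, i.e. when s <= t). *)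
Definition tdet (R : realFieldType) (s t : nat) (Q : 'M[R]_(s, t)) : R :=
  let l := [seq tvalue Q f | f <- transversals s t] in
  foldr Num.max (head 0 l) l.

(* Let T be a maximal transversal and a = Q i (T i).  Exchanging the columns
   of rows i and l in T gives another transversal, so
   Q i (T l) + Q l (T i) <= a + Q l (T l); summing over l bounds the part of
   the row sum R on the columns of T, together with C, by s a + tdet Q.
   Moving the entry of row i to a column outside T gives another transversal,
   so each of the remaining t - s entries of row i is at most a. *)
From HB Require Import structures.
From mathcomp Require Import all_boot all_order all_algebra.
From mathcomp Require Import lra perm.
Set Implicit Arguments. Unset Strict Implicit. Unset Printing Implicit Defensive.
Import Order.TTheory GRing.Theory Num.Theory.
Local Open Scope ring_scope.

Lemma tvalue_le_tdet (R : realFieldType) (s t : nat) (Q : 'M[R]_(s, t))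
    (g : {ffun 'I_s -> 'I_t}) :
  injective g -> tvalue Q g <= tdet Q.
Proof.
move=> /injectiveP g_inj; rewrite /tdet; set l := map _ _.
have : tvalue Q g \in l.
  by apply: map_f; rewrite mem_filter /is_tdet_transversal g_inj mem_enum.
move: (head 0 l) => d; elim: l => //= x l IHl.
rewrite in_cons le_max => /orP[/eqP->|/IHl->]; first by rewrite lexx.
by rewrite orbT.
Qed.

Section MaximalTransversal.

Variables (R : realFieldType) (s t : nat) (Q : 'M[R]_(s, t)).
Variable T : {ffun 'I_s -> 'I_t}.
Hypothesis T_inj : injective T.
Hypothesis T_max :
  forall g : {ffun 'I_s -> 'I_t}, injective g -> tvalue Q g <= tvalue Q T.

Let cols := T @: [set: 'I_s].

Lemma max_transversal_exchange i l :
  Q i (T l) + Q l (T i) <= Q i (T i) + Q l (T l).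
Proof.
have [->|l_neq_i] := eqVneq l i; first by [].
pose g := [ffun k => T (tperm i l k)].
have g_inj : injective g by move=> x y; rewrite !ffunE => /T_inj /perm_inj.
have gain : tvalue Q g - tvalue Q T
    = Q i (T l) + Q l (T i) - (Q i (T i) + Q l (T l)).
  rewrite -sumrB (bigD1 i) //= (bigD1 l) ?l_neq_i //= big1.
    by rewrite !ffunE tpermL tpermR; lra.
  move=> k /andP[k_neq_i k_neq_l].
  by rewrite ffunE tpermD 1?eq_sym ?k_neq_i ?k_neq_l ?subrr.
by rewrite -subr_le0 -gain subr_le0 T_max.
Qed.

Lemma max_transversal_free_col i c : c \notin cols -> Q i c <= Q i (T i).
Proof.
move=> c_free.
pose g := [ffun k => if k == i then c else T k].
have T_in_cols k : T k \in cols by rewrite imset_f ?inE.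
have g_inj : injective g.
  move=> x y; rewrite !ffunE.
  have [->|x_neq_i] := eqVneq x i; have [->|y_neq_i] := eqVneq y i => //.
  - by move=> c_eq; move: c_free; rewrite c_eq T_in_cols.
  - by move=> c_eq; move: c_free; rewrite -c_eq T_in_cols.
  - exact: T_inj.
have gain : tvalue Q g - tvalue Q T = Q i c - Q i (T i).
  rewrite -sumrB (bigD1 i) //= big1 ?addr0; first by rewrite ffunE eqxx.
  by move=> k k_neq_i; rewrite ffunE (negbTE k_neq_i) subrr.
by rewrite -subr_le0 -gain subr_le0 T_max.
Qed.

Lemma card_free_cols : #|~: cols| = (t - s)%N.
Proof.
have := cardsC cols; rewrite card_imset // cardsT !card_ord => card_t.
by rewrite -[in RHS]card_t addKn.
Qed.

Lemma row_sum_le i :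
  \sum_(j < t) Q i j <= \sum_(l < s) Q i (T l) + (t - s)%:R * Q i (T i).
Proof.
rewrite (bigID (mem cols)) /= lerD //.
  rewrite big_imset /=; last by move=> x y _ _; apply: T_inj.
  by rewrite (eq_bigl predT) // => x; rewrite inE.
apply: le_trans (ler_sum _ (fun j => @max_transversal_free_col i j)) _.
rewrite sumr_const -card_free_cols mulr_natl.
by rewrite (eq_card (B := ~: cols)) // => j; rewrite inE.
Qed.

Lemma exchange_sum_le i :
  \sum_(l < s) Q i (T l) + \sum_(k < s) Q k (T i)
    <= s%:R * Q i (T i) + tvalue Q T.
Proof.
have -> : s%:R * Q i (T i) = \sum_(l < s) Q i (T i).
  by rewrite sumr_const card_ord mulr_natl.
rewrite /tvalue -!big_split /=; apply: ler_sum => l _.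
exact: max_transversal_exchange.
Qed.

End MaximalTransversal.

Theorem lemma2p2 (R : realFieldType) (s t : nat) (Q : 'M[R]_(s, t))
  (hst : (s <= t)%N) (T : {ffun 'I_s -> 'I_t})
  (hT : is_tdet_transversal T) (hmax : tvalue Q T = tdet Q) (i : 'I_s) :
  \sum_(j < t) Q i j + \sum_(k < s) Q k (T i) <= tdet Q + t%:R * Q i (T i).
Proof.
have T_inj : injective T by apply/injectiveP.
have T_max (g : {ffun _ -> _}) : injective g -> tvalue Q g <= tvalue Q T.
  by rewrite hmax; apply: tvalue_le_tdet.
have row := row_sum_le T_inj T_max i.
have exch := exchange_sum_le T_inj T_max i.
rewrite natrB // in row; rewrite -hmax; lra.
Qed.
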